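(* For every integer $N\ge 0$, let $T_{2\times 3}(8,N)$ be the number of tilings of an $8\times n$ rectangle, $n=3N/4$, by $N$ tiles of size $2\times 3$ (and $0$ if $3N/4\notin\mathbb{Z}$). Then, as formal power series, \[ \sum_{N\ge 0} T_{2\times 3}(8,N)\,z^N=\frac{(1-z^4)^2}{1-3z^4+z^{12}-z^{16}}. \]
   Context: A tiling of an $m\times n$ rectangle (width $m$, length $n$, made of $mn$ unit squares) by $a\times b$ tiles is a partition of the rectangle into non-overlapping axis-parallel $a\times b$ rectangles with integer corner coordinates, each placed in either of its two orientations. Tilings related by reflections or rotations of the rectangle are counted as distinct. The empty tiling counts once for $N=0$. *)

From HB Require Import structures.
From mathcomp Require Import all_boot all_order all_algebra.
Set Implicit Arguments. Unset Strict Implicit. Unset Printing Implicit Defensive.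
Import GRing.Theory Num.Theory.

(* Unit cells of an m x n rectangle: (i, j) is the square [i,i+1] x [j,j+1],
   0 <= i < m (width direction), 0 <= j < n (length direction). *)
Definition cell (m n : nat) := ('I_m * 'I_n)%type.

Definition rect_at (m n x y w h : nat) : {set cell m n} :=
  [set c : cell m n | (x <= c.1 < x + w) && (y <= c.2 < y + h)].

Definition is_tile (m n a b : nat) (B : {set cell m n}) : bool :=
  [exists x : 'I_m.+1, exists y : 'I_n.+1,
     ((x + a <= m) && (y + b <= n) && (B == rect_at m n x y a b))
  || ((x + b <= m) && (y + a <= n) && (B == rect_at m n x y b a))].

Definition is_tiling (m n a b : nat) (P : {set {set cell m n}}) : bool :=
  finset.partition P [set: cell m n] && [forall B in P, @is_tile m n a b B].

Definition num_tilings (m n a b N : nat) : nat :=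
  #|[set P : {set {set cell m n}} | @is_tiling m n a b P & #|P| == N]|.

Definition T23_8 (N : nat) : nat :=
  if 4 %| 3 * N then num_tilings 8 (3 * N %/ 4) 2 3 N else 0.

Local Open Scope ring_scope.
Definition gf_num : {poly int} := (1 - 'X^4) ^+ 2.
Definition gf_den : {poly int} := 1 - 3%:P * 'X^4 + 'X^12 - 'X^16.

From mathcomp Require Import all_boot all_algebra.
From mathcomp Require Import zify.
Set Implicit Arguments. Unset Strict Implicit. Unset Printing Implicit Defensive.

(* Transfer matrix.  Sweep the 8 x n rectangle along its length, always
   covering the first uncovered cell.  Whenever a layer is complete, the state
   is the profile recording how far (0, 1 or 2 cells) each of the 8 rows is
   already covered beyond it; only 19 profiles are reachable from the flat one.
   The counts for these profiles at length L+1 are sums of counts at length L,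
   so a linear recurrence satisfied by all of them at one length holds at every
   later length.  Checking it at length 2 gives, for the number c(L) of tilings
   of the 8 x L rectangle, c(L+12) + c(L+3) = 3 c(L+9) + c(L).  A tiling by N
   tiles has 6N = 8n, so T(N) = c(3N/4) when 4 | N and 0 otherwise, whence
   T(N+16) - 3 T(N+12) + T(N+4) - T(N) = 0: this is the denominator, and the
   numerator is read off the first 16 coefficients. *)

Section TilingsOfSet.
Variables (T : finType) (is_block : {set T} -> bool).

Definition tilings (S : {set T}) : {set {set {set T}}} :=
  [set P | partition P S & [forall B in P, is_block B]].

Definition ntilings (S : {set T}) : nat := #|tilings S|.

Lemma ntilings_set0 : ntilings set0 = 1.
Proof.
rewrite /ntilings (_ : tilings set0 = [set set0]) ?cards1 //.
apply/setP => P; rewrite !inE partition_set0.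
by case: eqP => [->|] //=; apply/forall_inP => B; rewrite inE.
Qed.

Lemma notin_tilings_setD (S B : {set T}) Q c :
  Q \in tilings (S :\: B) -> c \in B -> B \notin Q.
Proof.
rewrite inE => /andP[pQ _] cB; apply/negP => BQ.
have : c \in cover Q by apply/bigcupP; exists B.
by rewrite (cover_partition pQ) inE cB.
Qed.

Lemma tilings_pblockE (S B : {set T}) c : c \in B -> B \subset S -> is_block B ->
  [set P in tilings S | pblock P c == B] = [set B |: Q | Q in tilings (S :\: B)].
Proof.
move=> cB BS bB; apply/setP => P; rewrite inE; apply/andP/imsetP.
- rewrite inE => -[/andP[pP /forall_inP bP] /eqP pbB].
  have cP : c \in cover P by rewrite (cover_partition pP) (subsetP BS).
  have BP : B \in P by rewrite -pbB pblock_mem.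
  exists (P :\ B); last by rewrite setD1K.
  rewrite inE (partitionD1 pP BP); apply/forall_inP => A /setD1P[_]; exact: bP.
- move=> [Q QS ->]; have BQ := notin_tilings_setD QS cB.
  move: QS; rewrite inE => /andP[pQ /forall_inP bQ].
  have B0 : B != set0 by apply/set0Pn; exists c.
  have pBQ : partition (B |: Q) S.
    have dBS : [disjoint B & S :\: B].
      by rewrite disjoint_sym; have /subsetDP[] := subxx (S :\: B).
    by rewrite -[X in partition _ X](setID S B) (setIidPr BS) partitionU1.
  rewrite inE pBQ; split.
    by apply/forall_inP => A /setU1P[->|/bQ].
  by rewrite (def_pblock (partition_trivIset pBQ) (setU11 B Q) cB).
Qed.

Lemma ntilings_pblock (S : {set T}) c : c \in S ->
  ntilings S =
  \sum_(B | [&& is_block B, c \in B & B \subset S]) ntilings (S :\: B).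
Proof.
move=> cS; rewrite /ntilings -sum1_card.
rewrite (partition_big (pblock^~ c)
  (fun B => [&& is_block B, c \in B & B \subset S])) /=.
  apply: eq_bigr => B /and3P[bB cB BS].
  transitivity #|[set P in tilings S | pblock P c == B]|.
    by rewrite -sum1_card; apply: eq_bigl => P; rewrite inE.
  rewrite tilings_pblockE // card_in_imset // => Q1 Q2 Q1S Q2S /= eQ.
  have := notin_tilings_setD Q1S cB; have := notin_tilings_setD Q2S cB.
  by move=> Q2B Q1B; rewrite -(setU1K Q1B) eQ setU1K.
move=> P; rewrite inE => /andP[pP /forall_inP bP].
have cP : c \in cover P by rewrite (cover_partition pP).
by rewrite bP ?mem_pblock ?cP ?(partitionS pP) ?pblock_mem.
Qed.
End TilingsOfSet.

Section ProfileCount.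
Variables (m a b : nat).

Definition free_run (d : seq nat) i0 w :=
  (i0 + w <= m) && all (fun i => nth 0 d i == 0) (iota i0 w).

Definition raise (d : seq nat) i0 w h :=
  mkseq (fun i => if i0 <= i < i0 + w then h else nth 0 d i) m.

(* [fill_column next L k d] counts the tilings of the region of profile [d]
   and remaining length [L] (see [profile_region]): the first free cell of the
   current layer is covered by an [a x b] or a [b x a] tile, and once the layer
   is full the count is passed to [next] with the profile shifted.  [k] is
   fuel: each placement increases [index 0 d], so [m.+1] steps suffice. *)
Fixpoint fill_column (next : seq nat -> nat) (L k : nat) (d : seq nat) : nat :=
  if k is k'.+1 then
    if 0 \in d then
      (if free_run d (index 0 d) a && (b <= L)
       then fill_column next L k' (raise d (index 0 d) a b) else 0) +
      (if free_run d (index 0 d) b && (a <= L)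
       then fill_column next L k' (raise d (index 0 d) b a) else 0)
    else next (map predn d)
  else 0.

Fixpoint profile_count (L : nat) (d : seq nat) : nat :=
  if L is L'.+1 then fill_column (profile_count L') L m.+1 d else 1.

Lemma free_runP d i0 w :
  reflect (i0 + w <= m /\ forall i, i0 <= i < i0 + w -> nth 0 d i = 0)
          (free_run d i0 w).
Proof.
apply: (iffP andP) => -[wm d0]; split => //.
  by move=> i Hi; apply/eqP; apply: (allP d0); rewrite mem_iota.
by apply/allP => i; rewrite mem_iota => /d0 ->.
Qed.

Lemma nth_raise d i0 w h i : i < m ->
  nth 0 (raise d i0 w h) i = if i0 <= i < i0 + w then h else nth 0 d i.
Proof. by move=> im; rewrite nth_mkseq. Qed.

Lemma size_raise d i0 w h : size (raise d i0 w h) = m.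
Proof. by rewrite size_mkseq. Qed.

Lemma index_raise d w h : 0 < w -> 0 < h -> index 0 d < m ->
  index 0 d < index 0 (raise d (index 0 d) w h).
Proof.
move=> w0 h0 im; rewrite ltnNge; apply/negP => le_id.
set d' := raise d (index 0 d) w h in le_id *.
have d'0 : 0 \in d' by rewrite -index_mem size_raise; lia.
have := nth_index 0 d'0; rewrite nth_raise; last by lia.
case: ifP => [|out d'i]; first by lia.
have lt_id : index 0 d' < index 0 d by move: out le_id; lia.
by have := before_find 0 lt_id; rewrite /= d'i eqxx.
Qed.

Fixpoint next_profiles (k : nat) (d : seq nat) : seq (seq nat) :=
  if k is k'.+1 then
    if 0 \in d then
      (if free_run d (index 0 d) a
       then next_profiles k' (raise d (index 0 d) a b) else [::]) ++
      (if free_run d (index 0 d) b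
       then next_profiles k' (raise d (index 0 d) b a) else [::])
    else [:: map predn d]
  else [::].

Lemma fill_column_next next L k d : a < b -> b <= L ->
  fill_column next L k d = \sum_(e <- next_profiles k d) next e.
Proof.
move=> a_lt_b bL; have aL : a <= L by lia.
elim: k d => [|k IHk] d /=; first by rewrite big_nil.
rewrite bL aL !andbT; case: ifP => _; last by rewrite big_seq1.
by rewrite big_cat; congr (_ + _); case: ifP; rewrite ?big_nil.
Qed.

Lemma profile_count_next L d : a < b -> b <= L.+1 ->
  profile_count L.+1 d =
  \sum_(e <- next_profiles m.+1 d) profile_count L e.
Proof. exact: fill_column_next. Qed.

End ProfileCount.

Section ProfileRegion.
Variables (m n : nat).

(* The cells still to be covered once row [i] is tiled up to length
   [j0 + nth 0 d i]. *)
Definition profile_region j0 (d : seq nat) : {set cell m n} :=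
  [set c : cell m n | j0 + nth 0 d c.1 <= c.2].

Lemma profile_region_over j0 d : n <= j0 -> profile_region j0 d = set0.
Proof.
move=> nj0; apply/setP => c; rewrite !inE; apply/negbTE; rewrite -ltnNge.
case: c => i j /=; have := ltn_ord j; lia.
Qed.

Lemma profile_region_shift j0 d : size d = m -> 0 \notin d ->
  profile_region j0 d = profile_region j0.+1 (map predn d).
Proof.
move=> sd d0; apply/setP => c; rewrite !inE (nth_map 0) ?sd //.
have : nth 0 d c.1 != 0 by apply: contraNneq d0 => <-; rewrite mem_nth ?sd.
by case: (nth 0 d c.1) => // k _; rewrite addSnnS.
Qed.

Lemma rect_at_first_free j0 d (c0 : cell m n) x y w h :
  c0.1 = index 0 d :> nat -> c0.2 = j0 :> nat ->
  x + w <= m -> y + h <= n -> 0 < w -> 0 < h ->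
  c0 \in rect_at m n x y w h -> rect_at m n x y w h \subset profile_region j0 d ->
  [/\ x = index 0 d, y = j0 & forall i, x <= i < x + w -> nth 0 d i = 0].
Proof.
move=> c01 c02 xw yh w0 h0 c0R Rsub.
have xm : x < m by lia.
have yn : y < n by lia.
have := subsetP Rsub (Ordinal xm, Ordinal yn); rewrite !inE /= => corner.
move: c0R; rewrite inE c01 c02 => /andP[/andP[x_i0 i0_x] /andP[y_j0 j0_y]].
have {corner} corner := corner ltac:(lia).
have dx : nth 0 d x = 0 by lia.
have x_eq : x = index 0 d.
  case: (ltnP x (index 0 d)) => [lt|]; last by lia.
  by have := before_find 0 lt; rewrite /= dx eqxx.
split=> [||i xi]; try lia.
have im : i < m by lia.
have j0n : j0 < n by lia.
have := subsetP Rsub (Ordinal im, Ordinal j0n); rewrite !inE /= => sub.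
by have := sub ltac:(lia); lia.
Qed.

Lemma rect_at_sub_region j0 d w h :
  (forall i, index 0 d <= i < index 0 d + w -> nth 0 d i = 0) ->
  rect_at m n (index 0 d) j0 w h \subset profile_region j0 d.
Proof.
move=> d0; apply/subsetP => c; rewrite !inE => /andP[/andP[? ?] /andP[? ?]].
by rewrite d0 //; lia.
Qed.

Lemma profile_region_setD_rect j0 d w h :
  (forall i, index 0 d <= i < index 0 d + w -> nth 0 d i = 0) ->
  profile_region j0 d :\: rect_at m n (index 0 d) j0 w h =
  profile_region j0 (raise m d (index 0 d) w h).
Proof.
move=> d0; apply/setP => c; rewrite !inE nth_raise //.
case: ifP => // inw; rewrite d0 // addn0; apply/idP/idP; lia.
Qed.

End ProfileRegion.

Section TilingsOfProfileRegion.
Variables (m n a b : nat).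
Local Notation is_tile := (@is_tile m n a b).
Local Notation ntilings := (ntilings is_tile).
Local Notation profile_region := (profile_region m n).

Lemma is_tile_rect_at j0 L d w h : j0 + L = n -> (w, h) \in [:: (a, b); (b, a)] ->
  free_run m d (index 0 d) w -> h <= L -> is_tile (rect_at m n (index 0 d) j0 w h).
Proof.
move=> jL wh /free_runP[wm _] hL.
have i0m : index 0 d < m.+1 by lia.
have j0n : j0 < n.+1 by lia.
apply/existsP; exists (Ordinal i0m); apply/existsP; exists (Ordinal j0n) => /=.
by move: wh wm hL; rewrite !inE => /orP[] /eqP[-> ->] wm hL; rewrite eqxx !andbT;
  apply/orP; [left | right]; lia.
Qed.

Hypotheses (a_gt0 : 0 < a) (a_lt_b : a < b).

Section FirstFreeCell.
Variables (j0 L : nat) (d : seq nat) (c0 : cell m n).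
Local Notation i0 := (index 0 d).

Lemma tile_at_first_free :
  c0.1 = i0 :> nat -> c0.2 = j0 :> nat -> j0 + L = n -> forall B,
  [&& is_tile B, c0 \in B & B \subset profile_region j0 d] =
  (free_run m d i0 a && (b <= L)) && (B == rect_at m n i0 j0 a b) ||
  (free_run m d i0 b && (a <= L)) && (B == rect_at m n i0 j0 b a).
Proof.
move=> c01 c02 j0_L B; apply/idP/idP.
- have fr (x w : nat) : x + w <= m -> x = i0 ->
      (forall i, x <= i < x + w -> nth 0 d i = 0) -> free_run m d i0 w.
    by move=> xw <- d0; apply/free_runP.
  case/and3P=> /existsP[x /existsP[y /orP[]]] /andP[/andP[xw yh] /eqP->] c0B Bsub.
  + have [x_i0 y_j0 d0] :=
      rect_at_first_free c01 c02 xw yh a_gt0 ltac:(lia) c0B Bsub.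
    by apply/orP; left; rewrite x_i0 y_j0 eqxx andbT (fr x) //=; lia.
  + have [x_i0 y_j0 d0] :=
      rect_at_first_free c01 c02 xw yh ltac:(lia) a_gt0 c0B Bsub.
    by apply/orP; right; rewrite x_i0 y_j0 eqxx andbT (fr x) //=; lia.
- have c0R w h : 0 < w -> 0 < h -> h <= L -> c0 \in rect_at m n i0 j0 w h.
    by move=> *; rewrite inE c01 c02; lia.
  case/orP=> /andP[/andP[fr hL] /eqP->]; have /free_runP[_ d0] := fr.
  + rewrite (is_tile_rect_at j0_L _ fr hL) ?mem_head // c0R //; last by lia.
    exact: rect_at_sub_region.
  + have ba_in : (b, a) \in [:: (a, b); (b, a)] by rewrite !inE eqxx orbT.
    rewrite (is_tile_rect_at j0_L ba_in fr hL) c0R //; last by lia.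
    exact: rect_at_sub_region.
Qed.

Lemma ntilings_first_free :
  size d = m -> c0.1 = i0 :> nat -> c0.2 = j0 :> nat -> j0 + L = n ->
  ntilings (profile_region j0 d) =
  (if free_run m d i0 a && (b <= L)
   then ntilings (profile_region j0 (raise m d i0 a b)) else 0) +
  (if free_run m d i0 b && (a <= L)
   then ntilings (profile_region j0 (raise m d i0 b a)) else 0).
Proof.
move=> size_d c01 c02 j0_L.
have c0_reg : c0 \in profile_region j0 d.
  have i0m : i0 < size d by rewrite -c01 size_d.
  by rewrite inE c01 c02 nth_index ?addn0 // -index_mem.
rewrite (ntilings_pblock _ c0_reg) (eq_bigl _ _ (tile_at_first_free c01 c02 j0_L)).
set R1 := rect_at m n i0 j0 a b; set R2 := rect_at m n i0 j0 b a.
have setD_R w h : free_run m d i0 w -> profile_region j0 d :\: rect_at m n i0 j0 w h =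
    profile_region j0 (raise m d i0 w h).
  by case/free_runP=> _; apply: profile_region_setD_rect.
case: ifP => [/andP[fr1 _]|_]; case: ifP => [/andP[fr2 hL2]|_] /=.
- have R12 : R1 != R2.
    have /free_runP[bm _] := fr2.
    have i0a : i0 + a < m by lia.
    have j0n : j0 < n by lia.
    apply/negP => /eqP R12.
    have : (Ordinal i0a, Ordinal j0n) \in R2 by rewrite inE /=; lia.
    by rewrite -R12 inE /=; lia.
  rewrite (bigD1 R1) ?eqxx //= (eq_bigl (pred1 R2)) ?big_pred1_eq ?setD_R //.
  by move=> B /=; case: (eqVneq B R1) => [->|]; rewrite ?(negbTE R12) ?andbT.
- by rewrite (eq_bigl (pred1 R1)) ?big_pred1_eq ?setD_R ?addn0 // => B; rewrite orbF.
- by rewrite (eq_bigl (pred1 R2)) ?big_pred1_eq ?setD_R.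
- by rewrite big_pred0.
Qed.

End FirstFreeCell.

Lemma ntilings_fill_column next L j0 : j0 + L.+1 = n ->
  (forall e, size e = m -> ntilings (profile_region j0.+1 e) = next e) ->
  forall k d, size d = m -> m - index 0 d < k ->
  ntilings (profile_region j0 d) = fill_column m a b next L.+1 k d.
Proof.
move=> j0_L IH; elim=> [|k IHk] d size_d; first by lia.
rewrite /=; case: ifPn => d0 k_bound; last first.
  by rewrite profile_region_shift // IH // size_map.
have i0m : index 0 d < m by rewrite -size_d index_mem.
have j0n : j0 < n by lia.
rewrite (@ntilings_first_free j0 L.+1 d (Ordinal i0m, Ordinal j0n)) //.
have b_gt0 : 0 < b by lia.
congr (_ + _); case: ifP => // /andP[_ _]; apply: IHk; rewrite ?size_raise //.
  by have := index_raise a_gt0 b_gt0 i0m; lia.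
by have := index_raise b_gt0 a_gt0 i0m; lia.
Qed.

Lemma ntilings_profile_region L j0 d : j0 + L = n -> size d = m ->
  ntilings (profile_region j0 d) = profile_count m a b L d.
Proof.
elim: L j0 d => [|L IHL] j0 d j0_L size_d.
  by rewrite profile_region_over ?ntilings_set0 //; lia.
apply: ntilings_fill_column => //; last by lia.
by move=> e size_e; apply: IHL => //; lia.
Qed.

Lemma ntilings_rectangle :
  ntilings [set: cell m n] = profile_count m a b n (nseq m 0).
Proof.
rewrite -(@ntilings_profile_region n 0) ?size_nseq //; congr ntilings.
by apply/setP => c; rewrite !inE nth_nseq if_same.
Qed.

End TilingsOfProfileRegion.

Section TransferRecurrence.
Variables (X : eqType) (states : seq X) (next : X -> seq X).
Variables (u : nat -> X -> nat) (L0 : nat).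
Hypothesis next_closed : {in states, forall s, {subset next s <= states}}.
Hypothesis u_next :
  forall L s, L0 <= L -> s \in states -> u L.+1 s = \sum_(t <- next s) u L t.

Definition lin_comb (cs : seq (nat * nat)) (f : nat -> nat) (L : nat) : nat :=
  sumn [seq c.1 * f (c.2 + L) | c <- cs].

Lemma lin_combE cs f L : lin_comb cs f L = \sum_(c <- cs) c.1 * f (c.2 + L).
Proof. by rewrite /lin_comb sumnE big_map. Qed.

Lemma lin_comb_next cs L s : L0 <= L -> s \in states ->
  lin_comb cs (u^~ s) L.+1 = \sum_(t <- next s) lin_comb cs (u^~ t) L.
Proof.
move=> L0L sS; rewrite lin_combE (eq_bigr _ (fun t _ => lin_combE _ _ _)).
rewrite exchange_big /=.
by apply: eq_bigr => c _; rewrite addnS u_next ?big_distrr //; lia.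
Qed.

Lemma lin_comb_rec lhs rhs :
  {in states, forall s, lin_comb lhs (u^~ s) L0 = lin_comb rhs (u^~ s) L0} ->
  forall L, L0 <= L ->
  {in states, forall s, lin_comb lhs (u^~ s) L = lin_comb rhs (u^~ s) L}.
Proof.
move=> base; elim=> [|L IHL]; first by rewrite leqn0 => /eqP <-.
rewrite leq_eqVlt => /orP[/eqP <- // | L0L] s sS.
rewrite !lin_comb_next //; apply: eq_big_seq => t /(next_closed sS) tS.
exact: IHL.
Qed.

End TransferRecurrence.

Definition tilings_8 (L : nat) : nat := profile_count 8 2 3 L (nseq 8 0).

(* The profiles reachable from the flat one for 2 x 3 tiles in width 8. *)
Definition profiles_8 : seq (seq nat) :=
  [:: [:: 0; 0; 0; 0; 0; 0; 0; 0]; [:: 2; 2; 2; 2; 2; 2; 2; 2];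
      [:: 2; 2; 1; 1; 1; 1; 1; 1]; [:: 1; 1; 1; 2; 2; 1; 1; 1];
      [:: 1; 1; 1; 1; 1; 1; 2; 2]; [:: 1; 1; 1; 1; 1; 1; 1; 1];
      [:: 1; 1; 0; 0; 0; 0; 0; 0]; [:: 0; 0; 0; 1; 1; 0; 0; 0];
      [:: 0; 0; 0; 0; 0; 0; 1; 1]; [:: 0; 0; 2; 2; 2; 2; 2; 2];
      [:: 0; 0; 1; 1; 1; 1; 1; 1]; [:: 1; 1; 1; 0; 0; 1; 1; 1];
      [:: 2; 2; 2; 2; 2; 2; 0; 0]; [:: 1; 1; 1; 1; 1; 1; 0; 0];
      [:: 2; 2; 0; 0; 0; 0; 0; 0]; [:: 0; 0; 0; 2; 2; 0; 0; 0];
      [:: 0; 0; 0; 0; 0; 0; 2; 2]; [:: 1; 1; 2; 2; 2; 2; 2; 2];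
      [:: 2; 2; 2; 2; 2; 2; 1; 1]].

Definition rec_lhs : seq (nat * nat) := [:: (1, 12); (1, 3)].
Definition rec_rhs : seq (nat * nat) := [:: (3, 9); (1, 0)].

Lemma profiles_8_closed :
  {in profiles_8, forall s, {subset next_profiles 8 2 3 9 s <= profiles_8}}.
Proof.
have closed : all (fun s => all (mem profiles_8) (next_profiles 8 2 3 9 s)) profiles_8.
  by vm_compute.
by move=> s /(allP closed) /allP.
Qed.

Lemma profiles_8_rec_at_2 : {in profiles_8, forall s,
  lin_comb rec_lhs (profile_count 8 2 3 ^~ s) 2 =
  lin_comb rec_rhs (profile_count 8 2 3 ^~ s) 2}.
Proof.
have base : all (fun s => lin_comb rec_lhs (profile_count 8 2 3 ^~ s) 2 ==
  lin_comb rec_rhs (profile_count 8 2 3 ^~ s) 2) profiles_8 by vm_compute.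
by move=> s /(allP base) /eqP.
Qed.

Lemma tilings_8_rec L :
  tilings_8 (L + 12) + tilings_8 (L + 3) = 3 * tilings_8 (L + 9) + tilings_8 L.
Proof.
(* The transfer step [profile_count_next] needs room for a tile of length 3. *)
have [|L2] := ltnP L 2.
  by case: L => [|[|L]] L2; [vm_compute | vm_compute | lia].
have count_next L' s : 2 <= L' -> s \in profiles_8 ->
    profile_count 8 2 3 L'.+1 s =
    \sum_(t <- next_profiles 8 2 3 9 s) profile_count 8 2 3 L' t.
  by move=> L2' _; apply: profile_count_next.
have := lin_comb_rec profiles_8_closed count_next profiles_8_rec_at_2 L2 (mem_head _ _).
rewrite !lin_combE !big_cons !big_nil !mul1n !addn0 => rec.
by rewrite ![_ + L]addnC addn0 in rec.
Qed.

Lemma card_interval m x w : x + w <= m -> #|[set i : 'I_m | x <= i < x + w]| = w.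
Proof.
elim: w => [|w IHw] xwm.
  by apply/eqP; rewrite cards_eq0; apply/eqP/setP => i; rewrite !inE addn0; lia.
have xw : x + w < m by lia.
rewrite (_ : [set i : 'I_m | _] = Ordinal xw |: [set i : 'I_m | x <= i < x + w]).
  by rewrite cardsU1 IHw ?inE /=; lia.
by apply/setP => i; rewrite !inE -val_eqE /=; lia.
Qed.

Lemma card_rect_at m n x y w h : x + w <= m -> y + h <= n ->
  #|rect_at m n x y w h| = w * h.
Proof.
move=> xw yh.
have -> : rect_at m n x y w h =
    setX [set i : 'I_m | x <= i < x + w] [set j : 'I_n | y <= j < y + h].
  by apply/setP => c; rewrite !inE.
by rewrite cardsX !card_interval.
Qed.

Lemma card_tile m n a b B : @is_tile m n a b B -> #|B| = a * b.
Proof.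
by case/existsP=> x /existsP[y /orP[]] /andP[/andP[xw yh] /eqP->];
  rewrite card_rect_at // mulnC.
Qed.

Lemma card_tiling m n a b P : @is_tiling m n a b P -> a * b * #|P| = m * n.
Proof.
case/andP=> pP /forall_inP tP.
have -> : m * n = #|[set: cell m n]| by rewrite cardsT card_prod !card_ord.
rewrite (card_partition pP).
by rewrite (eq_bigr _ (fun B BP => card_tile (tP B BP))) sum_nat_const mulnC.
Qed.

Lemma num_tilings_ntilings m n a b N : 0 < a * b -> a * b * N = m * n ->
  num_tilings m n a b N = ntilings (@is_tile m n a b) [set: cell m n].
Proof.
move=> ab0 abN; apply: eq_card => P; rewrite !inE.
case tP: (@is_tiling m n a b P) => //=.
by rewrite -(eqn_pmul2l ab0) card_tiling // abN eqxx.
Qed.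

Lemma T23_8E N : T23_8 N = if 4 %| N then tilings_8 (3 * (N %/ 4)) else 0.
Proof.
rewrite /T23_8 Gauss_dvdr //; case: ifP => // /dvdnP[k ->].
rewrite mulnA !mulnK // num_tilings_ntilings ?ntilings_rectangle //; lia.
Qed.

Lemma T23_8_rec N :
  T23_8 (N + 16) + T23_8 (N + 4) = 3 * T23_8 (N + 12) + T23_8 N.
Proof.
rewrite !T23_8E; have [/dvdnP[k ->]|N4] := boolP (4 %| N); last first.
  by rewrite !dvdn_addl // (negbTE N4).
have mul4D j : k * 4 + j * 4 = (k + j) * 4 by rewrite mulnDl.
rewrite (mul4D 4) (mul4D 3) (mul4D 1) !dvdn_mull // !mulnK // !mulnDr.
exact: tilings_8_rec.
Qed.

Import GRing.Theory.
Local Open Scope ring_scope.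

Lemma sum_ord_indicator (R : pzSemiRingType) (g : nat -> R) (a N : nat) :
  \sum_(k < N.+1) (k == a :> nat)%:R * g k = (a <= N)%:R * g a.
Proof.
have [aN|Na] := leqP a N.
  rewrite (bigD1 (inord a)) //= inordK // eqxx mul1r big1 ?addr0 //.
  by move=> k; rewrite -val_eqE /= inordK // => /negbTE->; rewrite mul0r.
by rewrite big1 ?mul0r // => k _; rewrite ltn_eqF ?mul0r // (leq_trans (ltn_ord k)).
Qed.

Lemma coef_gf_den k :
  gf_den`_k = (k == 0)%:R - 3 * (k == 4)%:R + (k == 12)%:R - (k == 16)%:R.
Proof. by rewrite /gf_den !(coefB, coefD, coef1, coefCM, coefXn). Qed.

Lemma coef_gf_num k : gf_num`_k = (k == 0)%:R - 2 * (k == 4)%:R + (k == 8)%:R.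
Proof.
rewrite /gf_num sqrrB expr1n mul1r -exprM !(coefB, coefD, coef1, coefMn, coefXn).
by rewrite mulr_natl.
Qed.

Lemma gf_den_conv (u : nat -> int) N :
  \sum_(k < N.+1) gf_den`_k * u (N - k)%N =
  u N - 3 * ((4 <= N)%:R * u (N - 4)%N) + (12 <= N)%:R * u (N - 12)%N
      - (16 <= N)%:R * u (N - 16)%N.
Proof.
under eq_bigr => k _ do rewrite coef_gf_den !mulrBl mulrDl mulrBl -mulrA.
rewrite !(sumrB, big_split) /= -mulr_sumr.
by rewrite !(sum_ord_indicator (fun k => u (N - k)%N)) subn0 mul1r.
Qed.

Theorem mainTheorem11 :
  forall N : nat,
    \sum_(k < N.+1) gf_den`_k * ((T23_8 (N - k)%N)%:Z) = gf_num`_N.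
Proof.
move=> N; rewrite (gf_den_conv (fun k => (T23_8 k)%:Z)) coef_gf_num.
have [small|large] := ltnP N 16.
  by rewrite !T23_8E; move: N small; do 16!(case=> [_|]; first by vm_compute).
have [M ->] : exists M, N = (M + 16)%N by exists (N - 16)%N; rewrite subnK.
rewrite !ltn_addl // !gtn_eqF ?ltn_addl // !mul1r !mulr0 subr0 addr0 mulr0n addnK.
have -> : (M + 16 - 4 = M + 12)%N by rewrite -addnBA.
have -> : (M + 16 - 12 = M + 4)%N by rewrite -addnBA.
have := T23_8_rec M; lia.
Qed.
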